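(* Let $G=SL(2,\mathbb{C})$ and let $B_1,B_2\in G$ satisfy $\mathsf{tr}([B_1,B_2])\neq 2$ (where $[B_1,B_2]=B_1B_2B_1^{-1}B_2^{-1}$). Then there exists $g\in G$ such that $A_j:=gB_jg^{-1}$, $j=1,2$, satisfy $A_j^T=A_j$. Let $n\ge 3$ and $\mathbf{r}=(t_1,t_2,t_{12})=(\mathsf{tr}A_1,\mathsf{tr}A_2,\mathsf{tr}(A_1A_2))$. Then for any $\mathbf{s}\in\mathbb{C}^{3n-6}$ there exist $A_3,\dots,A_n\in SL(2,\mathbb{C})$ such that $T_n(A_1,\dots,A_n)=(\mathbf{r},\mathbf{s})$. Moreover, given any $A=(A_1,\dots,A_n)\in G^{\times n}$ with $T_n(A)=(\mathbf{r},\mathbf{s})$, $\mathsf{tr}([A_1,A_2])\neq 2$, $A_1^T=A_1$ and $A_2^T=A_2$, the preimage $T_n^{-1}(\mathbf{r},\mathbf{s})$ consists of the $G$-orbits (under simultaneous conjugation) of the points of the finite set $\{(A_1,A_2,C_3,\dots,C_n): C_j=A_j \text{ or } C_j=A_j^T \text{ for } j=3,\dots,n\}$.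
   Context: $T$ denotes transposition. The Magnus trace map $T_n:G^{\times n}\to\mathbb{C}^{3n-3}$ is $T_n(A_1,\dots,A_n)=(t_1,t_2,t_{12},t_3,t_{13},t_{23},\dots,t_k,t_{1k},t_{2k},\dots,t_n,t_{1n},t_{2n})$, where $t_j=\mathsf{tr}(A_j)$ and $t_{jk}=\mathsf{tr}(A_jA_k)$. $G$ acts on $G^{\times n}$ by $g\cdot(A_1,\dots,A_n)=(gA_1g^{-1},\dots,gA_ng^{-1})$. *)

(* Complex numbers are modelled as R[i] = complex R for an
   arbitrary R : realType (every realType is a model of the reals). *)
From HB Require Import structures.
From mathcomp Require Import all_boot all_order all_algebra.
From mathcomp Require Import reals.
From mathcomp Require Export complex.
Set Implicit Arguments. Unset Strict Implicit. Unset Printing Implicit Defensive.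
Import Order.TTheory GRing.Theory Num.Theory.
Local Open Scope ring_scope.

Definition SL2 {C : comUnitRingType} (M : 'M[C]_2) : bool := \det M == 1.

Definition conjm {C : comUnitRingType} (g M : 'M[C]_2) : 'M[C]_2 := g * M * g^-1.

Definition commm {C : comUnitRingType} (B1 B2 : 'M[C]_2) : 'M[C]_2 :=
  B1 * B2 * B1^-1 * B2^-1.

(* Magnus trace map on a tuple A = [:: A_1; ...; A_n] (stored 0-based):
   (t1, t2, t12, t3, t13, t23, ..., tn, t1n, t2n). *)
Definition Tn {C : comUnitRingType} (A : seq 'M[C]_2) : seq C :=
  let a j := nth 0 A j in
  [:: \tr (a 0%N); \tr (a 1%N); \tr (a 0%N * a 1%N)] ++
  flatten [seq [:: \tr (a k); \tr (a 0%N * a k); \tr (a 1%N * a k)]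
          | k <- iota 2 (size A - 2)].

(* For A, B in SL(2) the Fricke identities give det (AB - BA) = 2 - tr [A, B], so the
   hypothesis says that K = AB - BA is invertible.  K is traceless and inverts A and B
   by conjugation (K A = A^-1 K); conjugating K to [[0, c], [-c, 0]] turns these
   relations into A^T = A and B^T = B.
   For a symmetric pair (A1, A2) with K invertible, Y |-> (tr Y, tr A1 Y, tr A2 Y) is
   injective on symmetric matrices and kills antisymmetric ones, while det Y = 1 fixes
   the antisymmetric part of Y up to sign; hence every triple (t_j, t_1j, t_2j) is
   attained in SL(2), exactly by some A_j and by A_j^T.
   Finally, two pairs with the same t1, t2, t12 and invertible K are simultaneously
   conjugate, since both are conjugate to the normal form obtained in a basis (v, A1 v)
   where v is an eigenvector of A2. *)

From HB Require Import structures.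
From mathcomp Require Import all_boot all_order all_algebra.
From mathcomp Require Import reals complex.
From mathcomp Require Import ring.
Import Order.TTheory GRing.Theory Num.Theory.
Local Open Scope ring_scope.

Set Implicit Arguments. Unset Strict Implicit. Unset Printing Implicit Defensive.

Section Mx2.
Variable R : comUnitRingType.
Implicit Types (a b c d : R) (A B M : 'M[R]_2).

Definition mx2 a b c d : 'M[R]_2 :=
  \matrix_(i, j) if i == 0 then if j == 0 then a else b else if j == 0 then c else d.

Lemma mx2_eta M : M = mx2 (M 0 0) (M 0 1) (M 1 0) (M 1 1).
Proof.
apply/matrixP => i j; rewrite !mxE.
by case: i => [[|[|i]] Hi] //=; case: j => [[|[|j]] Hj] //=; congr (M _ _); apply: val_inj.
Qed.

Lemma mx2_ind (P : 'M[R]_2 -> Prop) : (forall a b c d, P (mx2 a b c d)) -> forall M, P M.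
Proof. by move=> PM M; rewrite [M]mx2_eta. Qed.

Lemma mulmx2 a b c d a' b' c' d' :
  mx2 a b c d * mx2 a' b' c' d' =
  mx2 (a * a' + b * c') (a * b' + b * d') (c * a' + d * c') (c * b' + d * d').
Proof.
apply/matrixP => i j; rewrite !mxE !big_ord_recl big_ord0 !mxE.
by case: i => [[|[|i]] Hi] //=; case: j => [[|[|j]] Hj] //=; rewrite ?addr0.
Qed.

Lemma addmx2 a b c d a' b' c' d' :
  mx2 a b c d + mx2 a' b' c' d' = mx2 (a + a') (b + b') (c + c') (d + d').
Proof.
apply/matrixP => i j; rewrite !mxE.
by case: i => [[|[|i]] Hi] //=; case: j => [[|[|j]] Hj].
Qed.

Lemma oppmx2 a b c d : - mx2 a b c d = mx2 (- a) (- b) (- c) (- d).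
Proof.
apply/matrixP => i j; rewrite !mxE.
by case: i => [[|[|i]] Hi] //=; case: j => [[|[|j]] Hj].
Qed.

Lemma trmx2 a b c d : (mx2 a b c d)^T = mx2 a c b d.
Proof.
apply/matrixP => i j; rewrite !mxE.
by case: i => [[|[|i]] Hi] //=; case: j => [[|[|j]] Hj].
Qed.

Lemma mx2_1 : 1 = mx2 1 0 0 1.
Proof.
apply/matrixP => i j; rewrite !mxE.
by case: i => [[|[|i]] Hi] //=; case: j => [[|[|j]] Hj].
Qed.

Lemma mxtrace2 a b c d : \tr (mx2 a b c d) = a + d.
Proof. by rewrite /mxtrace !big_ord_recl big_ord0 !mxE /= addr0. Qed.

Lemma det_mx2 a b c d : \det (mx2 a b c d) = a * d - b * c.
Proof.
rewrite (expand_det_row _ 0) /cofactor !big_ord_recl big_ord0 !mxE /= !det_mx11 !mxE /=.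
by rewrite expr0 expr1; ring.
Qed.

Lemma SL2_mx2 a b c d : SL2 (mx2 a b c d) = (a * d == 1 + b * c).
Proof. by rewrite /SL2 det_mx2 subr_eq. Qed.

Lemma invmx2 a b c d : SL2 (mx2 a b c d) -> (mx2 a b c d)^-1 = mx2 d (- b) (- c) a.
Proof.
rewrite SL2_mx2 => /eqP det1.
have unitM : mx2 a b c d \is a GRing.unit.
  by rewrite -[_ \is a _]/(_ \in unitmx) unitmxE det_mx2 det1 addrK unitr1.
rewrite -[RHS](mulKr unitM); have -> : mx2 a b c d * mx2 d (- b) (- c) a = 1.
  by rewrite mulmx2 mx2_1; congr mx2; ring: det1.
by rewrite mulr1.
Qed.

Lemma SL2_unit M : SL2 M -> M \is a GRing.unit.
Proof. by rewrite /SL2 -[_ \is a _]/(_ \in unitmx) unitmxE => /eqP ->; exact: unitr1. Qed.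

Lemma SL2_invE M : SL2 M -> M^-1 = mx2 (M 1 1) (- M 0 1) (- M 1 0) (M 0 0).
Proof. by rewrite {1 2}[M]mx2_eta => /invmx2. Qed.

Section Conjugation.
Variable g : 'M[R]_2.
Hypothesis g_unit : g \is a GRing.unit.

Lemma conjmM A B : conjm g (A * B) = conjm g A * conjm g B.
Proof. by rewrite /conjm !mulrA mulrVK. Qed.

Lemma conjmV A : A \is a GRing.unit -> conjm g A^-1 = (conjm g A)^-1.
Proof. by move=> unitA; rewrite /conjm !invrM ?invrK ?mulrA ?unitrV ?unitrMl ?unitrMr. Qed.

Lemma mxtrace_conjm A : \tr (conjm g A) = \tr A.
Proof. by rewrite /conjm -!mulmxE mxtrace_mulC !mulmxA !mulmxE mulVr // mul1r. Qed.

Lemma SL2_conjm A : SL2 A -> SL2 (conjm g A).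
Proof.
have detg : \det g \is a GRing.unit by rewrite -unitmxE.
by rewrite /SL2 /conjm -!mulmxE !det_mulmx detV mulrC mulrA mulVr // mul1r.
Qed.

Lemma conjmVK : cancel (conjm g^-1) (conjm g).
Proof. by move=> A; rewrite /conjm invrK !mulrA mulrV // mul1r mulrK. Qed.

End Conjugation.

Lemma conjm_intertwined (h P P' : 'M[R]_2) :
  h \is a GRing.unit -> h * P = P' * h -> conjm h P = P'.
Proof. by move=> unith EhP; rewrite /conjm EhP mulrK. Qed.

Definition fricke (x y z : R) := x ^+ 2 + y ^+ 2 + z ^+ 2 - x * y * z - 2.

Definition bracket A B := A * B - B * A.

Lemma tr_commm A B : SL2 A -> SL2 B ->
  \tr (commm A B) = fricke (\tr A) (\tr B) (\tr (A * B)).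
Proof.
elim/mx2_ind: A => a b c d; elim/mx2_ind: B => a' b' c' d' SB SA.
rewrite /commm !invmx2 // !mulmx2 !mxtrace2 /fricke.
by move: SA SB; rewrite !SL2_mx2 => /eqP detA /eqP detB; ring: detA detB.
Qed.

Lemma det_bracket A B : SL2 A -> SL2 B ->
  \det (bracket A B) = 2 - fricke (\tr A) (\tr B) (\tr (A * B)).
Proof.
elim/mx2_ind: A => a b c d; elim/mx2_ind: B => a' b' c' d'.
rewrite /bracket !mulmx2 oppmx2 addmx2 det_mx2 !mxtrace2 /fricke !SL2_mx2.
by move=> /eqP detB /eqP detA; ring: detA detB.
Qed.

Lemma tr_commm_neq2 A B : SL2 A -> SL2 B ->
  (\tr (commm A B) != 2) = (\det (bracket A B) != 0).
Proof. by move=> SA SB; rewrite det_bracket // tr_commm // subr_eq0 eq_sym. Qed.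

Lemma mxtrace_bracket A B : \tr (bracket A B) = 0.
Proof. by rewrite /bracket raddfB /= -!mulmxE mxtrace_mulC subrr. Qed.

Lemma bracket_invl A B : SL2 A -> bracket A B * A = A^-1 * bracket A B.
Proof.
move=> SA; rewrite (SL2_invE SA); elim/mx2_ind: A SA => a b c d _.
elim/mx2_ind: B => a' b' c' d'; rewrite !mxE /= /bracket.
by rewrite !mulmx2 oppmx2 !addmx2 !mulmx2; congr mx2; ring.
Qed.

Lemma bracket_invr A B : SL2 B -> bracket A B * B = B^-1 * bracket A B.
Proof.
have bracketC : bracket A B = - bracket B A by rewrite /bracket opprB.
by move=> SB; rewrite bracketC mulNr bracket_invl // mulrN.
Qed.

Definition cyclic_basis M (v1 v2 : R) :=
  mx2 v1 (M 0 0 * v1 + M 0 1 * v2) v2 (M 1 0 * v1 + M 1 1 * v2).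

Definition companion2 M := mx2 0 (- \det M) 1 (\tr M).

Lemma cyclic_basisP M v1 v2 :
  M * cyclic_basis M v1 v2 = cyclic_basis M v1 v2 * companion2 M.
Proof.
elim/mx2_ind: M => a b c d; rewrite /cyclic_basis /companion2 det_mx2 mxtrace2 !mxE /=.
by rewrite !mulmx2; congr mx2; ring.
Qed.

Lemma cyclic_basis_eigen (P0 P1 : 'M[R]_2) (v1 v2 l m : R) :
  P1 0 0 * v1 + P1 0 1 * v2 = l * v1 -> P1 1 0 * v1 + P1 1 1 * v2 = l * v2 ->
  \tr P1 = l + m ->
  P1 * cyclic_basis P0 v1 v2 =
  cyclic_basis P0 v1 v2 * mx2 l (\tr (P0 * P1) - \tr P0 * m) 0 m.
Proof.
elim/mx2_ind: P0 => a b c d; elim/mx2_ind: P1 => p q r s.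
rewrite /cyclic_basis !mulmx2 !mxtrace2 !mxE /= => eigen1 eigen2 trP1.
congr mx2.
- by rewrite eigen1; ring.
- apply: subr0_eq; transitivity ((a + d) * (p * v1 + q * v2 - l * v1)
     - (a * (p * v1 + q * v2 - l * v1) + b * (r * v1 + s * v2 - l * v2))
     + (p + s - (l + m)) * (a * v1 + b * v2 - (a + d) * v1)); first by ring.
  by rewrite eigen1 eigen2 trP1 !subrr; ring.
- by rewrite eigen2; ring.
- apply: subr0_eq; transitivity ((a + d) * (r * v1 + s * v2 - l * v2)
     - (c * (p * v1 + q * v2 - l * v1) + d * (r * v1 + s * v2 - l * v2))
     + (p + s - (l + m)) * (c * v1 + d * v2 - (a + d) * v2)); first by ring.
  by rewrite eigen1 eigen2 trP1 !subrr; ring.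
Qed.

Lemma SL2_trmx M : SL2 M^T = SL2 M.
Proof. by rewrite /SL2 det_tr. Qed.

Definition trace_triple (X0 X1 M : 'M[R]_2) : seq R :=
  [:: \tr M; \tr (X0 * M); \tr (X1 * M)].

Lemma TnE (X0 X1 : 'M[R]_2) L :
  Tn [:: X0, X1 & L] =
  [:: \tr X0; \tr X1; \tr (X0 * X1)] ++ flatten (map (trace_triple X0 X1) L).
Proof.
rewrite /Tn /= !subSS subn0; do 3 congr (_ :: _); congr flatten.
rewrite (iotaDl 2 0) -map_comp -[in RHS](mkseq_nth 0 L) /mkseq -map_comp.
exact: eq_map.
Qed.

Lemma Tn_eq_cons2 (X0 X1 A0 A1 : 'M[R]_2) LX LA : size LX = size LA ->
  Tn [:: X0, X1 & LX] = Tn [:: A0, A1 & LA] ->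
  [/\ \tr X0 = \tr A0, \tr X1 = \tr A1, \tr (X0 * X1) = \tr (A0 * A1)
    & map (trace_triple X0 X1) LX = map (trace_triple A0 A1) LA].
Proof.
have shapeE (Y0 Y1 : 'M[R]_2) L : shape (map (trace_triple Y0 Y1) L) = nseq (size L) 3%N.
  by rewrite /shape -map_comp; elim: L => //= Y L ->.
rewrite !TnE => sizeE [-> -> -> flatE]; split => //.
by rewrite -[LHS]flattenK -[RHS]flattenK flatE !shapeE sizeE.
Qed.

Lemma trace_triple_conjm h (X0 X1 M : 'M[R]_2) : h \is a GRing.unit ->
  trace_triple (conjm h X0) (conjm h X1) (conjm h M) = trace_triple X0 X1 M.
Proof. by move=> unith; rewrite /trace_triple -!conjmM // !mxtrace_conjm. Qed.

Lemma Tn_conjm h (X0 X1 : 'M[R]_2) L : h \is a GRing.unit ->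
  Tn (map (conjm h) [:: X0, X1 & L]) = Tn [:: X0, X1 & L].
Proof.
move=> unith; rewrite /= !TnE -conjmM // !mxtrace_conjm //; congr (_ ++ flatten _).
by rewrite -map_comp; apply: eq_map => Y; exact: trace_triple_conjm.
Qed.

Lemma trace_triple_trmx (A0 A1 Y : 'M[R]_2) : A0^T = A0 -> A1^T = A1 ->
  trace_triple A0 A1 Y^T = trace_triple A0 A1 Y.
Proof.
have trmx_sym A : A^T = A -> \tr (A * Y^T) = \tr (A * Y).
  by move=> symA; rewrite -{1}symA -!mulmxE -trmx_mul mxtrace_tr mxtrace_mulC.
by move=> symA0 symA1; rewrite /trace_triple mxtrace_tr !trmx_sym.
Qed.

Lemma sym_mx2 M : M^T = M -> M = mx2 (M 0 0) (M 0 1) (M 0 1) (M 1 1).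
Proof.
by move=> symM; rewrite {1}[M]mx2_eta (_ : M 1 0 = M 0 1) // -{1}symM mxE.
Qed.

Lemma det_bracket_sym a b d a' b' d' :
  \det (bracket (mx2 a b b d) (mx2 a' b' b' d')) = (a * b' - a' * b + b * d' - b' * d) ^+ 2.
Proof. by rewrite /bracket !mulmx2 oppmx2 addmx2 det_mx2; ring. Qed.

Lemma trace_triple_sym a b d a' b' d' p q r s :
  trace_triple (mx2 a b b d) (mx2 a' b' b' d') (mx2 p q r s) =
  [:: p + s; a * p + b * (q + r) + d * s; a' * p + b' * (q + r) + d' * s].
Proof. by rewrite /trace_triple !mulmx2 !mxtrace2; congr [:: _; _; _]; ring. Qed.

End Mx2.

Section ClosedField.
Variable F : closedFieldType.
Implicit Types (A B M P Q : 'M[F]_2).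

Lemma exists_root2 (b c : F) : exists x : F, x ^+ 2 = b * x + c.
Proof.
have [x Dx] := @solve_monicpoly F 2 (nth 0 [:: c; b]) isT.
by exists x; rewrite Dx !big_ord_recl big_ord0 /= expr0 expr1 mulr1 addr0 addrC.
Qed.

Lemma exists_sqrt (a : F) : exists x : F, x ^+ 2 = a.
Proof. by have [x] := exists_root2 0 a; rewrite mul0r add0r; exists x. Qed.

Lemma unitmx2E M : (M \is a GRing.unit) = (\det M != 0).
Proof. by rewrite -[_ \is a _]/(_ \in unitmx) unitmxE unitfE. Qed.

(* [Q' Q^-1] maps every [P] to the matching [P']; dividing it by a square root of its
   determinant puts it in SL2 without changing the conjugation. *)
Lemma conjm_of_intertwiners Q Q' : Q \is a GRing.unit -> Q' \is a GRing.unit ->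
  exists2 h, SL2 h & forall P P' C, P * Q = Q * C -> P' * Q' = Q' * C -> conjm h P = P'.
Proof.
move=> unitQ unitQ'; set h0 := Q' * Q^-1.
have [s s2] := exists_sqrt (\det h0).
have dh0 : \det h0 != 0 by rewrite -unitmx2E unitrMr ?unitrV.
have s0 : s != 0 by apply: contra_neq dh0 => s0; rewrite -s2 s0 expr0n.
have det_h : \det (s^-1 *: h0) = 1 by rewrite detZ -s2 exprVn mulVf // expf_neq0.
exists (s^-1 *: h0); first by rewrite /SL2 det_h.
move=> P P' C EQ EQ'; apply: conjm_intertwined; first by rewrite unitmx2E det_h oner_neq0.
have QVP : Q^-1 * P = C * Q^-1.
  by rewrite -[LHS](mulrK unitQ) -(mulrA Q^-1 P Q) EQ mulrA mulVr ?mul1r.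
by rewrite -scalerAl -scalerAr /h0 -mulrA QVP !mulrA -EQ'.
Qed.

Lemma colinear2 (v1 v2 w1 w2 : F) : (v1 != 0) || (v2 != 0) -> v1 * w2 = w1 * v2 ->
  exists mu, w1 = mu * v1 /\ w2 = mu * v2.
Proof.
case/orP=> [v1_neq0 | v2_neq0] detE.
  exists (w1 / v1); rewrite divfK //; split=> //.
  by apply: (mulfI v1_neq0); rewrite detE; field.
exists (w2 / v2); rewrite divfK //; split=> //.
by apply: (mulIf v2_neq0); rewrite -detE; field.
Qed.

Lemma det_eq0_of_kernel M (v1 v2 : F) : (v1 != 0) || (v2 != 0) ->
  M 0 0 * v1 + M 0 1 * v2 = 0 -> M 1 0 * v1 + M 1 1 * v2 = 0 -> \det M = 0.
Proof.
elim/mx2_ind: M => a b c d; rewrite det_mx2 !mxE /= => v_neq0 ker1 ker2.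
have detv1 : (a * d - b * c) * v1 = d * (a * v1 + b * v2) - b * (c * v1 + d * v2) by ring.
have detv2 : (a * d - b * c) * v2 = a * (c * v1 + d * v2) - c * (a * v1 + b * v2) by ring.
rewrite ker1 ker2 !mulr0 subrr in detv1 detv2.
by case/orP: v_neq0 => /mulIf; [apply; rewrite detv1 | apply; rewrite detv2]; rewrite mul0r.
Qed.

Lemma bracket_common_eigen P0 P1 (v1 v2 mu l : F) :
  P0 0 0 * v1 + P0 0 1 * v2 = mu * v1 -> P0 1 0 * v1 + P0 1 1 * v2 = mu * v2 ->
  P1 0 0 * v1 + P1 0 1 * v2 = l * v1 -> P1 1 0 * v1 + P1 1 1 * v2 = l * v2 ->
  let K := bracket P0 P1 in K 0 0 * v1 + K 0 1 * v2 = 0 /\ K 1 0 * v1 + K 1 1 * v2 = 0.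
Proof.
elim/mx2_ind: P0 => a b c d; elim/mx2_ind: P1 => p q r s.
rewrite /bracket !mulmx2 oppmx2 addmx2 !mxE /= => e1 e2 f1 f2; split.
- transitivity ((a - mu) * (p * v1 + q * v2 - l * v1) + b * (r * v1 + s * v2 - l * v2)
    - (p - l) * (a * v1 + b * v2 - mu * v1) - q * (c * v1 + d * v2 - mu * v2)).
    by ring.
  by rewrite e1 e2 f1 f2 !subrr; ring.
- transitivity (c * (p * v1 + q * v2 - l * v1) + (d - mu) * (r * v1 + s * v2 - l * v2)
    - r * (a * v1 + b * v2 - mu * v1) - (s - l) * (c * v1 + d * v2 - mu * v2)).
    by ring.
  by rewrite e1 e2 f1 f2 !subrr; ring.
Qed.

Lemma exists_eigenvector M (l : F) : l ^+ 2 - \tr M * l + \det M = 0 ->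
  exists v1 v2 : F, [/\ (v1 != 0) || (v2 != 0),
    M 0 0 * v1 + M 0 1 * v2 = l * v1 & M 1 0 * v1 + M 1 1 * v2 = l * v2].
Proof.
elim/mx2_ind: M => p q r s; rewrite mxtrace2 det_mx2 !mxE /= => charl.
have charE (x y : F) : x = y - (l ^+ 2 - (p + s) * l + (p * s - q * r)) -> x = y.
  by rewrite charl subr0.
have [v_neq0 | ] := boolP ((q != 0) || (l - p != 0)).
  by exists q, (l - p); split => //; [ring | apply: charE; ring].
have [v_neq0 | ] := boolP ((l - s != 0) || (r != 0)).
  by exists (l - s), r; split => //; [apply: charE; ring | ring].
move=> /norP[_ /negPn/eqP->] /norP[/negPn/eqP-> /negPn/eqP/subr0_eq->].
by exists 1, 0; rewrite oner_neq0; split => //; ring.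
Qed.

Lemma unit_cyclic_basis_eigen P0 P1 (v1 v2 l : F) : (v1 != 0) || (v2 != 0) ->
  P1 0 0 * v1 + P1 0 1 * v2 = l * v1 -> P1 1 0 * v1 + P1 1 1 * v2 = l * v2 ->
  \det (bracket P0 P1) != 0 -> cyclic_basis P0 v1 v2 \is a GRing.unit.
Proof.
move=> v_neq0 eigen1 eigen2; rewrite unitmx2E /cyclic_basis det_mx2; apply: contra_neq.
move=> /subr0_eq/(colinear2 v_neq0)[mu [e1 e2]].
have [ker1 ker2] := bracket_common_eigen e1 e2 eigen1 eigen2.
exact: det_eq0_of_kernel ker1 ker2.
Qed.

Lemma pair_normal_form P0 P1 (l : F) : SL2 P1 -> l ^+ 2 - \tr P1 * l + 1 = 0 ->
  \det (bracket P0 P1) != 0 ->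
  exists2 Q, Q \is a GRing.unit & P0 * Q = Q * companion2 P0 /\
    P1 * Q = Q * mx2 l (\tr (P0 * P1) - \tr P0 * (\tr P1 - l)) 0 (\tr P1 - l).
Proof.
move=> /eqP detP1 charl dP.
have := @exists_eigenvector P1 l; rewrite detP1 => /(_ charl)[v1 [v2 [v_neq0 eigen1 eigen2]]].
exists (cyclic_basis P0 v1 v2); first exact: unit_cyclic_basis_eigen eigen1 eigen2 dP.
split; first exact: cyclic_basisP.
by apply: cyclic_basis_eigen eigen1 eigen2 _; rewrite addrC subrK.
Qed.

Lemma conj_pair P0 P1 X0 X1 : SL2 P0 -> SL2 P1 -> SL2 X0 -> SL2 X1 ->
  \tr X0 = \tr P0 -> \tr X1 = \tr P1 -> \tr (X0 * X1) = \tr (P0 * P1) ->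
  \det (bracket P0 P1) != 0 ->
  exists2 h, SL2 h & conjm h P0 = X0 /\ conjm h P1 = X1.
Proof.
move=> SP0 SP1 SX0 SX1 trX0 trX1 trX01 dP.
have dX : \det (bracket X0 X1) != 0 by rewrite det_bracket // trX0 trX1 trX01 -det_bracket.
have [l charl] := exists_root2 (\tr P1) (-1).
have {}charl : l ^+ 2 - \tr P1 * l + 1 = 0 by rewrite charl; ring.
have [Q unitQ [EP0 EP1]] := pair_normal_form SP1 charl dP.
have charlX : l ^+ 2 - \tr X1 * l + 1 = 0 by rewrite trX1.
have [Q' unitQ' [EX0 EX1]] := pair_normal_form SX1 charlX dX.
have [h Sh conjh] := conjm_of_intertwiners unitQ unitQ'.
exists h => //; split; [apply: (conjh _ _ _ EP0) | apply: (conjh _ _ _ EP1)].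
- by rewrite EX0 /companion2 (eqP SP0) (eqP SX0) trX0.
- by rewrite EX1 trX0 trX1 trX01.
Qed.

Hypothesis two_neq0 : (2 : F) != 0.

Lemma exists_cyclic_vector M : \tr M = 0 -> \det M != 0 ->
  exists v1 v2, cyclic_basis M v1 v2 \is a GRing.unit.
Proof.
elim/mx2_ind: M => a b c d; rewrite mxtrace2 det_mx2 => tr0 det_neq0.
have detQ v1 v2 : \det (cyclic_basis (mx2 a b c d) v1 v2) =
    v1 * (c * v1 + d * v2) - (a * v1 + b * v2) * v2.
  by rewrite /cyclic_basis det_mx2 !mxE.
have [c0 | c_neq0] := eqVneq c 0; last first.
  by exists 1, 0; rewrite unitmx2E detQ (_ : _ - _ = c) //; ring.
have [b0 | b_neq0] := eqVneq b 0; last first.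
  by exists 0, 1; rewrite unitmx2E detQ (_ : _ - _ = - b) ?oppr_eq0 //; ring.
have da : d = - a by apply/eqP; rewrite -subr_eq0 opprK addrC tr0.
have a_neq0 : a != 0 by apply: contra_neq det_neq0 => a0; rewrite da b0 c0 a0; ring.
exists 1, 1; rewrite unitmx2E detQ c0 b0 da.
by rewrite (_ : _ - _ = - (2 * a)); [rewrite oppr_eq0 mulf_neq0 | ring].
Qed.

Lemma symmetric_of_conj_inv M (c : F) : c != 0 -> SL2 M ->
  mx2 0 c (- c) 0 * M = M^-1 * mx2 0 c (- c) 0 -> M^T = M.
Proof.
move=> c_neq0 SM; rewrite (SL2_invE SM) {SM}; elim/mx2_ind: M => a b b' d.
rewrite !mxE /= !mulmx2 trmx2 => /(congr1 (fun N : 'M_2 => N 0 0)); rewrite !mxE /= => E.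
suff -> : b' = b by [].
by apply: (mulfI c_neq0); transitivity (0 * a + c * b'); [ring | rewrite E; ring].
Qed.

Lemma symmetrize B1 B2 : SL2 B1 -> SL2 B2 -> \det (bracket B1 B2) != 0 ->
  exists g, SL2 g /\ (conjm g B1)^T = conjm g B1 /\ (conjm g B2)^T = conjm g B2.
Proof.
move=> SB1 SB2 dK; set K := bracket B1 B2.
have [c c2] := exists_sqrt (\det K).
have c_neq0 : c != 0 by apply: contra_neq dK => c0; rewrite -c2 c0 expr0n.
set J := mx2 0 c (- c) 0.
have [v1 [v2 unitQ]] := exists_cyclic_vector (mxtrace_bracket B1 B2) dK.
have unitQ' : cyclic_basis J 1 0 \is a GRing.unit.
  by rewrite unitmx2E /cyclic_basis det_mx2 !mxE /= (_ : _ - _ = - c) ?oppr_eq0 //; ring.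
have [g Sg conjg] := conjm_of_intertwiners unitQ unitQ'.
have gK : conjm g K = J.
  apply: conjg (cyclic_basisP K v1 v2) _; rewrite cyclic_basisP; congr (_ * _).
  by rewrite /companion2 mxtrace_bracket -c2 det_mx2 mxtrace2; congr mx2; ring.
have unitg := SL2_unit Sg.
have symm B : SL2 B -> K * B = B^-1 * K -> (conjm g B)^T = conjm g B.
  move=> SB KB; apply: (symmetric_of_conj_inv c_neq0 (SL2_conjm unitg SB)).
  by rewrite -/J -gK -!conjmM // KB conjmM // conjmV // SL2_unit.
exists g; split => //; split; apply: symm => //; [exact: bracket_invl | exact: bracket_invr].
Qed.

Lemma sym_trace_system (a b d a' b' d' u v w : F) :
  a * b' - a' * b + b * d' - b' * d != 0 ->
  u + v = 0 -> a * u + b * w + d * v = 0 -> a' * u + b' * w + d' * v = 0 ->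
  [/\ u = 0, v = 0 & w = 0].
Proof.
set e := _ - _ + _ - _ => e_neq0 eq1 eq2 eq3.
have eu : e * u = 0.
  transitivity (b' * (a * u + b * w + d * v) - b * (a' * u + b' * w + d' * v)
    - (d * b' - d' * b) * (u + v)); first by rewrite /e; ring.
  by rewrite eq1 eq2 eq3; ring.
have u0 : u = 0 by move/eqP: eu; rewrite mulf_eq0 (negbTE e_neq0) => /eqP.
have v0 : v = 0 by rewrite -eq1 u0 add0r.
rewrite u0 v0 !mulr0 !addr0 !add0r in eq2 eq3.
have ew : e * w = 0.
  transitivity (a * (b' * w) - a' * (b * w) + d' * (b * w) - d * (b' * w)).
    by rewrite /e; ring.
  by rewrite eq2 eq3; ring.
by split=> //; move/eqP: ew; rewrite mulf_eq0 (negbTE e_neq0) => /eqP.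
Qed.

Lemma trace_triple_sym_inj (S0 S1 Y Z : 'M[F]_2) : S0^T = S0 -> S1^T = S1 ->
  \det (bracket S0 S1) != 0 -> SL2 Y -> SL2 Z ->
  trace_triple S0 S1 Z = trace_triple S0 S1 Y -> Z = Y \/ Z = Y^T.
Proof.
move=> /sym_mx2-> /sym_mx2->.
move: (S0 0 0) (S0 0 1) (S0 1 1) (S1 0 0) (S1 0 1) (S1 1 1) => a b d a' b' d'.
rewrite det_bracket_sym expf_eq0 /= => e_neq0.
elim/mx2_ind: Y => p q r s; elim/mx2_ind: Z => p' q' r' s'.
rewrite !SL2_mx2 !trace_triple_sym trmx2 => /eqP detY /eqP detZ [t1 t2 t3].
have [/subr0_eq p'E /subr0_eq s'E w0] :
    [/\ p' - p = 0, s' - s = 0 & q' + r' - (q + r) = 0].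
  apply: (sym_trace_system e_neq0).
  - by transitivity ((p' + s') - (p + s)); [ring | rewrite t1 subrr].
  - transitivity ((a * p' + b * (q' + r') + d * s') - (a * p + b * (q + r) + d * s)).
      by ring.
    by rewrite t2 subrr.
  - transitivity ((a' * p' + b' * (q' + r') + d' * s') - (a' * p + b' * (q + r) + d' * s)).
      by ring.
    by rewrite t3 subrr.
have r'E : r' = q + r - q' by rewrite -(subr0_eq w0); ring.
have : (q' - q) * (q' - r) = 0.
  transitivity ((1 + q * r) - (1 + q' * r') + q' * (q' + r' - (q + r))); first by ring.
  by rewrite -detY -detZ p'E s'E w0; ring.
move/eqP; rewrite mulf_eq0 !subr_eq0 => /orP[]/eqP q'E; rewrite p'E s'E r'E q'E.
- by left; congr mx2; ring.
- by right; congr mx2; ring.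
Qed.

Lemma trace_triple_sym_surj (S0 S1 : 'M[F]_2) (x y z : F) : S0^T = S0 -> S1^T = S1 ->
  \det (bracket S0 S1) != 0 -> exists2 Y, SL2 Y & trace_triple S0 S1 Y = [:: x; y; z].
Proof.
move=> /sym_mx2-> /sym_mx2->.
move: (S0 0 0) (S0 0 1) (S0 1 1) (S1 0 0) (S1 0 1) (S1 1 1) => a b d a' b' d'.
rewrite det_bracket_sym expf_eq0 /=; set e := _ - _ + _ - _ => e_neq0.
(* Cramer's rule for the symmetric part [[p, q], [q, s]]; [det = 1] then fixes the
   antisymmetric part [t] up to sign. *)
pose p := (x * (b * d' - b' * d) + b' * y - b * z) / e.
pose s := (b * z - b' * y + x * (a * b' - a' * b)) / e.
pose q := ((y * d' - z * d) - x * (a * d' - a' * d) + (a * z - a' * y)) / (2 * e).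
have [t t2] := exists_sqrt (1 - (p * s - q ^+ 2)).
exists (mx2 p (q + t) (q - t) s).
  rewrite SL2_mx2 (_ : (q + t) * (q - t) = q ^+ 2 - t ^+ 2); last by ring.
  by rewrite t2; apply/eqP; ring.
by rewrite trace_triple_sym /p /s /q /e; congr [:: _; _; _]; field; rewrite ?e_neq0 ?two_neq0.
Qed.

Lemma exists_trace_triples (S0 S1 : 'M[F]_2) m (s : seq F) :
  S0^T = S0 -> S1^T = S1 -> \det (bracket S0 S1) != 0 -> size s = (3 * m)%N ->
  exists As, [/\ size As = m, all SL2 As & flatten (map (trace_triple S0 S1) As) = s].
Proof.
move=> symS0 symS1 dS; elim: m s => [|m IHm] s.
  by rewrite muln0 => /size0nil->; exists [::].
case: s => [|x [|y [|z s]]] /eqP; rewrite mulnS !addSn add0n ?eqSS //= => /eqP size_s.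
have [As [sizeAs SAs flatAs]] := IHm s size_s.
have [Y SY [trY trS0Y trS1Y]] := trace_triple_sym_surj x y z symS0 symS1 dS.
by exists (Y :: As); rewrite /= sizeAs SY SAs trY trS0Y trS1Y flatAs.
Qed.

Section Fiber.
Variables (A0 A1 : 'M[F]_2) (LA : seq 'M[F]_2).
Hypotheses (SA0 : SL2 A0) (SA1 : SL2 A1) (SLA : all SL2 LA).
Hypotheses (symA0 : A0^T = A0) (symA1 : A1^T = A1) (dA : \det (bracket A0 A1) != 0).

Lemma Tn_fiber_conj X :
  size X = (size LA).+2 -> all SL2 X -> Tn X = Tn [:: A0, A1 & LA] ->
  exists h, SL2 h /\ exists Cs, size Cs = size LA /\
    (forall j, (j < size LA)%N -> nth 0 Cs j = nth 0 LA j \/ nth 0 Cs j = (nth 0 LA j)^T) /\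
    X = map (conjm h) [:: A0, A1 & Cs].
Proof.
case: X => [|X0 [|X1 LX]] //= [sizeLX] /and3P[SX0 SX1 SLX].
move=> /(Tn_eq_cons2 sizeLX)[tr0 tr1 tr01 triplesE].
have [h Sh [hA0 hA1]] := conj_pair SA0 SA1 SX0 SX1 tr0 tr1 tr01 dA.
have unith := SL2_unit Sh.
exists h; split => //; exists (map (conjm h^-1) LX); split; first by rewrite size_map.
split; last by rewrite /= hA0 hA1 -map_comp map_id_in // => Y _; exact: conjmVK.
move=> j lt_j; have lt_jX : (j < size LX)%N by rewrite sizeLX.
rewrite (nth_map 0) //; apply: (trace_triple_sym_inj symA0 symA1 dA).
- exact: (all_nthP 0 SLA).
- by apply: SL2_conjm; [rewrite unitrV | exact: (all_nthP 0 SLX)].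
- rewrite -(trace_triple_conjm _ _ _ unith) conjmVK // hA0 hA1.
  by rewrite -(nth_map 0 [::] _ lt_jX) triplesE (nth_map 0) // -sizeLX.
Qed.

Lemma Tn_conj_transposes h Cs : SL2 h -> size Cs = size LA ->
  (forall j, (j < size LA)%N -> nth 0 Cs j = nth 0 LA j \/ nth 0 Cs j = (nth 0 LA j)^T) ->
  let X := map (conjm h) [:: A0, A1 & Cs] in
  [/\ size X = (size LA).+2, all SL2 X & Tn X = Tn [:: A0, A1 & LA]].
Proof.
move=> Sh sizeCs transposes X; have unith := SL2_unit Sh.
have SCs : all SL2 Cs.
  apply/(all_nthP 0) => j; rewrite sizeCs => lt_j.
  by case: (transposes j lt_j) => ->; rewrite ?SL2_trmx; exact: (all_nthP 0 SLA).
split.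
- by rewrite /X /= size_map sizeCs.
- rewrite all_map; apply/allP => Y Y_in /=; apply: SL2_conjm => //.
  by move: Y Y_in; apply/allP/and3P.
- rewrite Tn_conjm // !TnE; congr (_ ++ flatten _).
  apply: (@eq_from_nth _ [::]) => [|j]; rewrite !size_map ?sizeCs // => lt_j.
  rewrite !(nth_map 0) ?sizeCs //.
  by case: (transposes j lt_j) => ->; rewrite ?trace_triple_trmx.
Qed.

Lemma Tn_fiberP X :
  (size X = (size LA).+2 /\ all SL2 X /\ Tn X = Tn [:: A0, A1 & LA]) <->
  (exists h, SL2 h /\ exists Cs, size Cs = size LA /\
    (forall j, (j < size LA)%N -> nth 0 Cs j = nth 0 LA j \/ nth 0 Cs j = (nth 0 LA j)^T) /\
    X = map (conjm h) [:: A0, A1 & Cs]).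
Proof.
split=> [[sizeX [SX TX]] | [h [Sh [Cs [sizeCs [transposes ->]]]]]].
  exact: Tn_fiber_conj sizeX SX TX.
by have [] := Tn_conj_transposes Sh sizeCs transposes.
Qed.

End Fiber.

End ClosedField.

Local Open Scope complex_scope.

Theorem theorem1p3 (R : realType) (B1 B2 : 'M[R[i]]_2) :
  SL2 B1 -> SL2 B2 -> \tr (commm B1 B2) != 2 ->
  (exists g : 'M[R[i]]_2, SL2 g /\
      (conjm g B1)^T = conjm g B1 /\ (conjm g B2)^T = conjm g B2) /\
  (forall g : 'M[R[i]]_2, SL2 g ->
      (conjm g B1)^T = conjm g B1 -> (conjm g B2)^T = conjm g B2 ->
   forall n : nat, (3 <= n)%N ->
   forall s : seq R[i], size s = (3 * n - 6)%N ->
     (exists As : seq 'M[R[i]]_2, size As = (n - 2)%N /\ all SL2 As /\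
        Tn [:: conjm g B1, conjm g B2 & As] =
          [:: \tr (conjm g B1); \tr (conjm g B2);
              \tr (conjm g B1 * conjm g B2)] ++ s) /\
     (forall A : seq 'M[R[i]]_2,
        size A = n -> all SL2 A ->
        Tn A = [:: \tr (conjm g B1); \tr (conjm g B2);
                   \tr (conjm g B1 * conjm g B2)] ++ s ->
        \tr (commm (nth 0 A 0) (nth 0 A 1)) != 2 ->
        (nth 0 A 0)^T = nth 0 A 0 -> (nth 0 A 1)^T = nth 0 A 1 ->
        forall X : seq 'M[R[i]]_2,
          (size X = n /\ all SL2 X /\
           Tn X = [:: \tr (conjm g B1); \tr (conjm g B2);
                      \tr (conjm g B1 * conjm g B2)] ++ s)
          <->
          (exists h : 'M[R[i]]_2, SL2 h /\
           exists Cs : seq 'M[R[i]]_2, size Cs = (n - 2)%N /\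
             (forall j : nat, (j < n - 2)%N ->
                nth 0 Cs j = nth 0 A j.+2 \/ nth 0 Cs j = (nth 0 A j.+2)^T) /\
             X = map (conjm h) [:: nth 0 A 0, nth 0 A 1 & Cs]))).
Proof.
have two_neq0 : (2 : R[i]) != 0 by rewrite pnatr_eq0.
move=> SB1 SB2; rewrite tr_commm_neq2 // => dB.
split; first exact: (symmetrize two_neq0).
move=> g Sg symB1 symB2 n n_ge3 s size_s; have unitg := SL2_unit Sg.
split.
  have dgB : \det (bracket (conjm g B1) (conjm g B2)) != 0.
    by rewrite det_bracket ?SL2_conjm // -conjmM // !mxtrace_conjm // -det_bracket.
  have size_s' : size s = (3 * (n - 2))%N by rewrite mulnBr.
  have [As [sizeAs SAs flatAs]] := exists_trace_triples two_neq0 symB1 symB2 dgB size_s'.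
  by exists As; rewrite TnE flatAs.
case=> [|A0 [|A1 LA]] sizeA; try by rewrite -sizeA in n_ge3.
rewrite /= => /and3P[SA0 SA1 SLA] TA.
rewrite tr_commm_neq2 // => dA symA0 symA1 X.
have -> : (n - 2)%N = size LA by rewrite -sizeA subn2.
by rewrite -sizeA -TA; exact: (Tn_fiberP SA0 SA1 SLA symA0 symA1 dA X).
Qed.
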